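(* Let $0\le f\le\lfloor n/2\rfloor$ and $d\in\mathcal D_{\nu_f}$. Suppose $d=d's_j$ for some $1\le j\le n-1$ and $d'\in\mathfrak S_n$ with $\ell(d)=\ell(d')+1$. Then $d'\in\mathcal D_{\nu_f}$.
   Context: $\mathfrak S_n$ acts on $\{1,\dots,n\}$ on the right: $(a)(\sigma\tau)=((a)\sigma)\tau$; $s_j=(j,j+1)$ and $\ell$ is the Coxeter length. For $0\le f\le\lfloor n/2\rfloor$ let $\nu_f=((2^f),(n-2f))$, a bipartition of $n$ (first component $f$ rows of length $2$, second component one row of length $n-2f$), and let $\mathfrak t^{\nu_f}$ be the bitableau with $1,\dots,n$ entered in order along successive rows of the first component and then along the row of the second component. For $d\in\mathfrak S_n$, $\mathfrak t^{\nu_f}d$ is obtained by replacing each entry $a$ by $(a)d$. $\mathcal D_{\nu_f}$ is the set of $d\in\mathfrak S_n$ such that $\mathfrak t^{\nu_f}d$ is row standard (entries increase along each row of each component) and the first column of its first component increases from top to bottom. *)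

From mathcomp Require Import all_boot all_order all_fingroup.
Set Implicit Arguments. Unset Strict Implicit. Unset Printing Implicit Defensive.

(* Conventions (0-indexed): the symbol a in {1,...,n} is the ordinal a-1 : 'I_n.
   MathComp permutations compose as (s * t) x = t (s x), i.e. exactly the
   right action (a)(st) = ((a)s)t of the paper; (a)d is written d a. *)

Definition coxeter_length n (s : 'S_n) : nat :=
  #|[set p : 'I_n * 'I_n | (p.1 < p.2) && (s p.2 < s p.1)]|.

(* d \in D_{nu_f}: t^{nu_f} d is row standard and the first column of its first
   component increases.  In t^{nu_f} (0-indexed) row r < f of the first component
   is (2r, 2r+1), and the second component is the row 2f, 2f+1, ..., n-1. *)
Definition in_D_nu n (f : nat) (d : 'S_n) : Prop :=
  [/\
      (forall i j : 'I_n, ~~ odd i -> val j = (val i).+1 -> val j < 2 * f ->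
         d i < d j),
      (forall i j : 'I_n, 2 * f <= val i -> val j = (val i).+1 -> d i < d j)
    &
      (forall i j : 'I_n, ~~ odd i -> val j = (val i).+2 -> val j < 2 * f ->
         d i < d j)].

From mathcomp Require Import all_boot all_order all_fingroup.
From mathcomp Require Import zify.

Set Implicit Arguments.
Unset Strict Implicit.
Unset Printing Implicit Defensive.

(* As functions, d' = d followed by the swap of the adjacent values j, j+1.
   That swap keeps the relative order of every pair of positions except the
   pair carrying the values j, j+1; and if d put j before j+1, the swap would
   create a new inversion, so d' would be longer than d, not shorter.  Hence
   d' preserves every non-inversion of d, while all the conditions defining
   D_{nu_f} ask for non-inversions at prescribed pairs of positions. *)

Definition inversions n (s : 'S_n) : {set 'I_n * 'I_n} :=
  [set p : 'I_n * 'I_n | (p.1 < p.2) && (s p.2 < s p.1)].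

Lemma coxeter_lengthE n (s : 'S_n) : coxeter_length s = #|inversions s|.
Proof. by []. Qed.

Section AdjacentTransposition.

Variables (n : nat) (j k : 'I_n).
Hypothesis hjk : val k = (val j).+1.

Lemma tperm_adjacent_lt (a b : 'I_n) :
  a < b -> (a, b) != (j, k) -> tperm j k a < tperm j k b.
Proof.
move: hjk; rewrite xpair_eqE !permE /= -!(inj_eq val_inj) /=.
by do !case: eqP; lia.
Qed.

Lemma inversions_proper_mul_tperm (s : 'S_n) (x y : 'I_n) :
  x < y -> s x = j -> s y = k -> inversions s \proper inversions (s * tperm j k)%g.
Proof.
move=> ltxy sxj syk; apply/properP; split.
  apply/subsetP => -[a b]; rewrite !inE /= !permM => /andP[ltab lt_sba].
  rewrite ltab /=.
  apply: tperm_adjacent_lt => //; apply: contraTneq ltab => -[sbj sak].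
  rewrite -sxj -syk in sbj sak.
  by rewrite (perm_inj sbj) (perm_inj sak) -leqNgt ltnW.
exists (x, y); rewrite !inE /= ltxy ?permM sxj syk ?tpermL ?tpermR /=.
  by rewrite hjk.
by rewrite -leqNgt hjk.
Qed.

Lemma mul_tperm_lt (s : 'S_n) (x y : 'I_n) :
  coxeter_length (s * tperm j k)%g <= coxeter_length s ->
  x < y -> s x < s y -> (s * tperm j k)%g x < (s * tperm j k)%g y.
Proof.
move=> len_le ltxy ltsxy; rewrite !permM tperm_adjacent_lt // xpair_eqE.
apply/negP => /andP[/eqP sxj /eqP syk].
have := proper_card (inversions_proper_mul_tperm ltxy sxj syk).
by rewrite -!coxeter_lengthE ltnNge len_le.
Qed.

End AdjacentTransposition.

Lemma in_D_nu_lt_preserving n f (d d' : 'S_n) :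
  (forall x y : 'I_n, x < y -> d x < d y -> d' x < d' y) ->
  in_D_nu f d -> in_D_nu f d'.
Proof.
move=> lt_pres [rows_fst row_snd col_fst].
split=> i i' ? e_i' *; apply: lt_pres; rewrite ?e_i' //.
- exact: rows_fst.
- exact: row_snd.
- exact: col_fst.
Qed.

Theorem lemma5p2 (n f : nat) (hf : f <= n./2) (d d' : 'S_n) (j k : 'I_n)
    (hjk : val k = (val j).+1) :
  in_D_nu f d ->
  d = (d' * tperm j k)%g ->
  coxeter_length d = (coxeter_length d').+1 ->
  in_D_nu f d'.
Proof.
move=> d_in def_d len_d.
have def_d' : d' = (d * tperm j k)%g by rewrite def_d -mulgA tperm2 mulg1.
apply: in_D_nu_lt_preserving d_in => x y; rewrite def_d'.
by apply: mul_tperm_lt; rewrite // -def_d' len_d.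
Qed.
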